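(* The large deviation functions of the tracer position have the following asymptotics as $|\xi|\to\infty$: $$\phi_a(\xi)\simeq\rho|\xi|,\qquad \phi_q(\xi)\simeq\frac{\rho}{3\sigma^2}|\xi|^3 .$$ Here $\simeq$ means the ratio tends to $1$.
   Context: System: Brownian point particles on $\mathbb{R}$ with hard-core repulsion. Free single-particle propagator: $g(z,t\mid y,0)=(\pi\sigma^2 t)^{-1/2}\exp[-(z-y)^2/(\sigma^2 t)]$. The tracer starts at the origin. The other particles' initial positions form a Poisson point process of intensity $\rho>0$. $\phi_a$ is the annealed large deviation function of the tracer position: $$\phi_a(\xi)=\frac{\rho\sigma}{2}\big[\sqrt{h(\xi/\sigma)}-\sqrt{h(-\xi/\sigma)}\big]^2,\qquad h(\xi)=\int_\xi^\infty\operatorname{erfc}(\eta)\,d\eta .$$ $\phi_q$ is the quenched large deviation function, given parametrically by $$\phi_q(\xi)=\rho B\xi-\rho\sigma I(B),\qquad \xi=\sigma I'(B),$$ $$I(B)=\int_0^\infty\ln[1+\sinh^2(B/2)\operatorname{erfc}(\eta)\operatorname{erfc}(-\eta)]\,d\eta,$$ and extended to negative $\xi$ by $\phi_q(-\xi)=\phi_q(\xi)$. $\operatorname{erfc}(x)=\frac{2}{\sqrt\pi}\int_x^\infty e^{-u^2}du$. *)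

From Stdlib Require Import Reals ClassicalEpsilon.
Open Scope R_scope.

(* The (proper) Riemann integral of f over [a,b], when it exists
   (chosen by classical description; value irrelevant otherwise). *)
Definition RInt (f : R -> R) (a b : R) : R :=
  epsilon (inhabits 0)
    (fun l => exists pr : Riemann_integrable f a b, RiemannInt pr = l).

Definition is_int_to_infty (f : R -> R) (a l : R) : Prop :=
  (forall b, a <= b -> exists pr : Riemann_integrable f a b, True) /\
  (forall eps, 0 < eps -> exists M, forall b, M <= b -> a <= b ->
      Rabs (RInt f a b - l) < eps).

Definition Int_to_infty (f : R -> R) (a : R) : R :=
  epsilon (inhabits 0) (fun l => is_int_to_infty f a l).

Definition erfc (x : R) : R :=
  2 / sqrt PI * Int_to_infty (fun u => exp (- (u * u))) x.

Definition h (xi : R) : R := Int_to_infty erfc xi.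

Definition phi_a (rho sigma xi : R) : R :=
  rho * sigma / 2 * (sqrt (h (xi / sigma)) - sqrt (h (- xi / sigma))) ^ 2.

Definition I (B : R) : R :=
  Int_to_infty (fun eta => ln (1 + sinh (B / 2) ^ 2 * erfc eta * erfc (- eta))) 0.

Definition B_of (sigma xi : R) : R :=
  epsilon (inhabits 0)
    (fun B => 0 <= B /\ derivable_pt_lim I B (Rabs xi / sigma)).

(* quenched LDF: phi_q(xi) = rho B xi - rho sigma I(B), xi = sigma I'(B),
   for xi >= 0, extended evenly: phi_q(-xi) = phi_q(xi). *)
Definition phi_q (rho sigma xi : R) : R :=
  let B := B_of sigma xi in
  rho * B * Rabs xi - rho * sigma * I B.

Definition equiv_at_infty (f g : R -> R) : Prop :=
  forall eps, 0 < eps -> exists M, forall xi, M < Rabs xi ->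
    Rabs (f xi / g xi - 1) < eps.

(* Annealed case: [erfc u + erfc (- u) = 2] gives [h (- v) = 2 v + h v], while
   [0 <= h v <= h 0] for [v >= 0].  With [v = |xi| / sigma] this makes [phi_a] equal to
   [rho sigma / 2 * (sqrt (2 v + h v) - sqrt (h v)) ^ 2 = rho |xi| + O(sqrt |xi|)].

   Quenched case: [erfc eta * erfc (- eta)] decays like a Gaussian and [sinh (B/2) ^ 2] is
   of order [exp B], so the integrand of [I (T ^ 2)] is [T ^ 2 - eta ^ 2 + O(1)] for
   [eta <= T] and negligible beyond; hence [I (T ^ 2) = 2/3 T ^ 3 + O(T ^ 2)].  [I] is convex
   and differentiable under the integral sign, with [I' 0 = 0], so [x = |xi| / sigma] is the
   slope of a supporting line of [I] at some [T ^ 2].  Comparing that line with the cubic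
   bounds at [(T (1 +- eps)) ^ 2] squeezes [x = T (1 + o(1))], and then
   [phi_q = rho sigma (T ^ 2 x - I (T ^ 2)) = rho sigma x ^ 3 / 3 (1 + o(1))]. *)

From Pilot Require Import Defs.
From Stdlib Require Import Reals Psatz ClassicalEpsilon Classical FunctionalExtensionality.
From Coquelicot Require Import Coquelicot.
Open Scope R_scope.

(** * Riemann integrals of real functions *)

Lemma Defs_RInt_eq (f : R -> R) a b : ex_RInt f a b -> Defs.RInt f a b = RInt f a b.
Proof.
  intros Hf. unfold Defs.RInt.
  destruct (epsilon_spec (inhabits 0)
    (fun l => exists pr : Riemann_integrable f a b, RiemannInt pr = l)) as [pr <-].
  - exists (RiemannInt (ex_RInt_Reals_0 _ _ _ Hf)). now eexists.
  - symmetry; apply RInt_Reals.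
Qed.

(* Coquelicot states the following for an arbitrary normed module, in terms of [plus], [scal]
   and [opp]; these real instances let them be used for rewriting and with [lra]. *)
Lemma ex_derive_continuous_R (f : R -> R) x : ex_derive f x -> continuous f x.
Proof. exact (ex_derive_continuous f x). Qed.

Lemma ex_RInt_continuous_R (f : R -> R) a b : (forall x, continuous f x) -> ex_RInt f a b.
Proof. intros Hf. now apply (ex_RInt_continuous (V := R_CompleteNormedModule)). Qed.

Lemma ex_RInt_Chasles_1_R (f : R -> R) a b c :
  a <= b <= c -> ex_RInt f a c -> ex_RInt f a b.
Proof. exact (ex_RInt_Chasles_1 f a b c). Qed.

Lemma RInt_ext_R (f g : R -> R) a b :
  (forall x, Rmin a b < x < Rmax a b -> f x = g x) -> RInt f a b = RInt g a b.
Proof. exact (RInt_ext f g a b). Qed.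

Lemma RInt_swap_R (f : R -> R) a b : ex_RInt f a b -> RInt f b a = - RInt f a b.
Proof. intros Hf. now rewrite <- (opp_RInt_swap f a b Hf). Qed.

Lemma RInt_Chasles_R (f : R -> R) a b c : ex_RInt f a b -> ex_RInt f b c ->
  RInt f a c = RInt f a b + RInt f b c.
Proof. intros Hab Hbc. now rewrite <- (RInt_Chasles f a b c Hab Hbc). Qed.

Lemma RInt_plus_R (f g : R -> R) a b : ex_RInt f a b -> ex_RInt g a b ->
  RInt (fun x => f x + g x) a b = RInt f a b + RInt g a b.
Proof. exact (RInt_plus f g a b). Qed.

Lemma RInt_scal_R (f : R -> R) a b c : ex_RInt f a b ->
  RInt (fun x => c * f x) a b = c * RInt f a b.
Proof. exact (RInt_scal f a b c). Qed.

Lemma RInt_const_R a b c : RInt (fun _ => c) a b = (b - a) * c.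
Proof. exact (RInt_const a b c). Qed.

Lemma RInt_comp_opp_R (f : R -> R) a b : (forall x, continuous f x) ->
  RInt (fun u => f (- u)) a b = - RInt f (- a) (- b).
Proof.
  intros Hf.
  assert (Hfo : ex_RInt (fun u => f (- u)) a b).
  { apply ex_RInt_continuous_R. intros x. apply (continuous_comp (fun u => - u)); [|apply Hf].
    apply ex_derive_continuous_R. auto_derive. auto. }
  assert (Hscal : RInt (fun u => -1 * f (- u)) a b = RInt f (- a) (- b)).
  { replace (- a) with (-1 * a + 0) by ring. replace (- b) with (-1 * b + 0) by ring.
    rewrite <- (RInt_comp_lin f (-1) 0 a b) by (apply ex_RInt_continuous_R; auto).
    apply RInt_ext_R. intros x _. now replace (-1 * x + 0) with (- x) by ring. }
  rewrite (RInt_scal_R (fun u => f (- u))) in Hscal by exact Hfo. lra.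
Qed.

Lemma RInt_derive_R (F f : R -> R) a b :
  (forall x, is_derive F x (f x)) -> (forall x, continuous f x) -> RInt f a b = F b - F a.
Proof.
  intros HF Hf. apply is_RInt_unique, (is_RInt_derive (V := R_CompleteNormedModule));
    intros x _; auto.
Qed.

(** * Improper integrals over [a, +oo) *)

Lemma is_int_to_infty_iff (f : R -> R) a l :
  is_int_to_infty f a l <->
  (forall b, a <= b -> ex_RInt f a b) /\ is_lim (fun b => RInt f a b) p_infty l.
Proof.
  unfold is_int_to_infty. rewrite <- is_lim_spec. split.
  - intros [Hex Hlim].
    assert (HexR : forall b, a <= b -> ex_RInt f a b).
    { intros b Hb. destruct (Hex b Hb) as [pr _]. now apply ex_RInt_Reals_1. }
    split; [exact HexR|]. intros [eps Heps].
    destruct (Hlim eps Heps) as [M HM]. exists (Rmax M a). intros b Hb.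
    rewrite <- Defs_RInt_eq by (apply HexR; apply Rmax_Rlt in Hb; lra).
    apply Rmax_Rlt in Hb. apply HM; lra.
  - intros [Hex Hlim]. split.
    + intros b Hb. now exists (ex_RInt_Reals_0 _ _ _ (Hex b Hb)).
    + intros eps Heps. destruct (Hlim (mkposreal eps Heps)) as [M HM].
      exists (M + 1). intros b Hb Hab. rewrite Defs_RInt_eq by auto. apply HM. lra.
Qed.

Lemma is_int_to_infty_unique (f : R -> R) a l :
  is_int_to_infty f a l -> Int_to_infty f a = l.
Proof.
  intros Hl. unfold Int_to_infty.
  assert (Hc : is_int_to_infty f a (epsilon (inhabits 0) (fun l => is_int_to_infty f a l)))
    by (apply epsilon_spec; now exists l).
  apply is_int_to_infty_iff, proj2, is_lim_unique in Hl.
  apply is_int_to_infty_iff, proj2, is_lim_unique in Hc.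
  rewrite Hl in Hc. now injection Hc.
Qed.

Lemma is_int_to_infty_0 a : is_int_to_infty (fun _ => 0) a 0.
Proof.
  apply is_int_to_infty_iff. split.
  - intros; apply ex_RInt_continuous_R; intros; apply continuous_const.
  - apply is_lim_ext with (fun _ => 0); [|apply is_lim_const].
    intros b. rewrite RInt_const_R. ring.
Qed.

Lemma is_int_to_infty_ext (f g : R -> R) a l : (forall x, a <= x -> f x = g x) ->
  is_int_to_infty f a l -> is_int_to_infty g a l.
Proof.
  intros Hfg. rewrite !is_int_to_infty_iff. intros [Hex Hlim].
  assert (HR : forall b, a <= b -> RInt f a b = RInt g a b).
  { intros b Hb. apply RInt_ext_R. intros x Hx. rewrite Rmin_left in Hx by lra. apply Hfg; lra. }
  split.
  - intros b Hb. apply ex_RInt_ext with f; [|auto].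
    intros x Hx. rewrite Rmin_left in Hx by lra. apply Hfg; lra.
  - apply is_lim_ext_loc with (fun b => RInt f a b); [|auto].
    exists a. intros b Hb. apply HR; lra.
Qed.

Lemma is_int_to_infty_plus (f g : R -> R) a l1 l2 :
  is_int_to_infty f a l1 -> is_int_to_infty g a l2 ->
  is_int_to_infty (fun x => f x + g x) a (l1 + l2).
Proof.
  rewrite !is_int_to_infty_iff. intros [Hf Lf] [Hg Lg]. split.
  - intros b Hb. apply (ex_RInt_plus (V := R_NormedModule)); auto.
  - apply is_lim_ext_loc with (fun b => RInt f a b + RInt g a b).
    + exists a. intros b Hb. symmetry; apply RInt_plus_R; [apply Hf|apply Hg]; lra.
    + now apply is_lim_plus'.
Qed.

Lemma is_int_to_infty_scal (f : R -> R) a l c :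
  is_int_to_infty f a l -> is_int_to_infty (fun x => c * f x) a (c * l).
Proof.
  rewrite !is_int_to_infty_iff. intros [Hf Lf]. split.
  - intros b Hb. apply (ex_RInt_scal (V := R_NormedModule)); auto.
  - apply is_lim_ext_loc with (fun b => c * RInt f a b).
    + exists a. intros b Hb. symmetry; apply RInt_scal_R, Hf; lra.
    + exact (is_lim_scal_l _ c _ _ Lf).
Qed.

Lemma is_int_to_infty_minus (f g : R -> R) a l1 l2 :
  is_int_to_infty f a l1 -> is_int_to_infty g a l2 ->
  is_int_to_infty (fun x => f x - g x) a (l1 - l2).
Proof.
  intros Hf Hg.
  apply is_int_to_infty_ext with (fun x => f x + -1 * g x); [intros; ring|].
  replace (l1 - l2) with (l1 + -1 * l2) by ring.
  now apply is_int_to_infty_plus, is_int_to_infty_scal.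
Qed.

Lemma is_int_to_infty_le (f g : R -> R) a l1 l2 :
  is_int_to_infty f a l1 -> is_int_to_infty g a l2 ->
  (forall x, a <= x -> f x <= g x) -> l1 <= l2.
Proof.
  rewrite !is_int_to_infty_iff. intros [Hf Lf] [Hg Lg] Hfg.
  apply (is_lim_le_loc (fun b => RInt f a b) (fun b => RInt g a b) p_infty l1 l2); auto.
  exists a. intros b Hb.
  apply RInt_le; [lra|apply Hf; lra|apply Hg; lra|intros; apply Hfg; lra].
Qed.

Lemma is_int_to_infty_abs_le (f k : R -> R) a l L :
  is_int_to_infty f a l -> is_int_to_infty k a L ->
  (forall x, a <= x -> Rabs (f x) <= k x) -> Rabs l <= L.
Proof.
  intros Hf Hk Hfk. apply Rabs_le. split.
  - replace (- L) with (-1 * L) by ring.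
    apply (is_int_to_infty_le (fun x => -1 * k x) f a); auto.
    + now apply is_int_to_infty_scal.
    + intros x Hx. specialize (Hfk x Hx). apply Rabs_le_between in Hfk. lra.
  - apply (is_int_to_infty_le f k a); auto.
    intros x Hx. specialize (Hfk x Hx). apply Rabs_le_between in Hfk. lra.
Qed.

Lemma is_int_to_infty_Chasles (f : R -> R) a c l : (forall x y, ex_RInt f x y) ->
  is_int_to_infty f a l -> is_int_to_infty f c (RInt f c a + l).
Proof.
  intros Hf. rewrite !is_int_to_infty_iff. intros [_ Hlim]. split; [auto|].
  apply is_lim_ext_loc with (fun b => RInt f c a + RInt f a b).
  - exists a. intros b _. symmetry; apply RInt_Chasles_R; apply Hf.
  - apply is_lim_plus'; [apply is_lim_const | exact Hlim].
Qed.

Lemma RInt_nonneg_incr (f : R -> R) a b c :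
  (forall y, a <= y -> ex_RInt f a y) -> (forall x, a <= x -> 0 <= f x) ->
  a <= b <= c -> RInt f a b <= RInt f a c.
Proof.
  intros Hf Hpos Hbc.
  assert (Hab : ex_RInt f a b) by (apply ex_RInt_Chasles_1_R with c; [lra|apply Hf; lra]).
  assert (Hbc' : ex_RInt f b c) by (apply (ex_RInt_Chasles_2 f a); [lra|apply Hf; lra]).
  rewrite (RInt_Chasles_R f a b c Hab Hbc').
  assert (0 <= RInt f b c); [|lra].
  apply RInt_ge_0; [lra|exact Hbc'|]. intros; apply Hpos; lra.
Qed.

Lemma RInt_le_is_int_to_infty (f : R -> R) a l b :
  is_int_to_infty f a l -> (forall x, a <= x -> 0 <= f x) -> a <= b -> RInt f a b <= l.
Proof.
  rewrite is_int_to_infty_iff. intros [Hf Hlim] Hpos Hab.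
  apply (is_lim_le_loc (fun _ => RInt f a b) (fun c => RInt f a c) p_infty (RInt f a b) l);
    [|apply is_lim_const|exact Hlim].
  exists b. intros c Hc. apply RInt_nonneg_incr; auto; lra.
Qed.

(* The partial integrals are nondecreasing, so they converge to their supremum. *)
Lemma is_int_to_infty_bounded (f : R -> R) a K :
  (forall b, a <= b -> ex_RInt f a b) -> (forall x, a <= x -> 0 <= f x) ->
  (forall b, a <= b -> RInt f a b <= K) -> exists l, is_int_to_infty f a l.
Proof.
  intros Hf Hpos HK.
  set (E := fun y => exists b, a <= b /\ y = RInt f a b).
  destruct (completeness E) as [l [Hub Hlub]].
  - exists K. intros y [b [Hb ->]]. auto.
  - exists (RInt f a a), a. split; [lra|auto].
  exists l. apply is_int_to_infty_iff. split; [exact Hf|].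
  apply is_lim_spec. intros [eps Heps].
  destruct (classic (exists b, a <= b /\ l - eps < RInt f a b)) as [[b0 [Hb0 Hlt]]|Hn].
  - exists b0. intros b Hb. simpl.
    assert (RInt f a b <= l) by (apply Hub; exists b; split; [lra|auto]).
    assert (RInt f a b0 <= RInt f a b) by (apply RInt_nonneg_incr; auto; lra).
    apply Rabs_def1; lra.
  - exfalso. assert (l <= l - eps); [|lra].
    apply Hlub. intros y [b [Hb ->]].
    apply Rnot_lt_le; intro; apply Hn; now exists b.
Qed.

Lemma is_int_to_infty_dominated (f k : R -> R) a L :
  (forall b, a <= b -> ex_RInt f a b) -> (forall x, a <= x -> Rabs (f x) <= k x) ->
  is_int_to_infty k a L -> exists l, is_int_to_infty f a l.
Proof.
  intros Hf Hfk Hk.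
  pose proof (proj1 (proj1 (is_int_to_infty_iff k a L) Hk)) as Hkex.
  assert (Hbetween : forall x, a <= x -> - k x <= f x <= k x)
    by (intros x Hx; apply Rabs_le_between, Hfk, Hx).
  assert (HkL : forall b, a <= b -> RInt k a b <= L).
  { intros b Hb. apply (RInt_le_is_int_to_infty k a); auto.
    intros x Hx. specialize (Hbetween x Hx). lra. }
  destruct (is_int_to_infty_bounded (fun x => f x + k x) a (2 * L)) as [l Hl].
  - intros b Hb. apply (ex_RInt_plus (V := R_NormedModule)); auto.
  - intros x Hx. specialize (Hbetween x Hx). lra.
  - intros b Hb. rewrite RInt_plus_R by auto.
    assert (RInt f a b <= RInt k a b); [|specialize (HkL b Hb); lra].
    apply RInt_le; auto. intros x Hx. specialize (Hbetween x ltac:(lra)). lra.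
  - exists (l + -1 * L).
    apply is_int_to_infty_ext with (fun x => (f x + k x) + -1 * k x); [intros; ring|].
    now apply is_int_to_infty_plus, is_int_to_infty_scal.
Qed.

Lemma is_int_to_infty_exp_linear c a :
  is_int_to_infty (fun u => exp (c - 2 * u)) a (exp (c - 2 * a) / 2).
Proof.
  set (F := fun u => - exp (c - 2 * u) / 2).
  assert (HF : forall u, is_derive F u (exp (c - 2 * u)))
    by (intros u; unfold F; auto_derive; [auto|unfold Rminus; field]).
  assert (Hcont : forall u, continuous (fun u => exp (c - 2 * u)) u)
    by (intros u; apply ex_derive_continuous_R; auto_derive; auto).
  apply is_int_to_infty_iff. split.
  - intros b _. now apply ex_RInt_continuous_R.
  - apply is_lim_ext with (fun b => exp (c - 2 * a) / 2 + -1 / 2 * exp (c - 2 * b)).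
    + intros b. rewrite (RInt_derive_R F) by auto. unfold F. lra.
    + assert (Hlin : is_lim (fun b => c - 2 * b) p_infty m_infty).
      { apply is_lim_spec. intros M. exists ((c - M) / 2). intros b Hb. lra. }
      assert (Hexp : is_lim (fun b => exp (c - 2 * b)) p_infty 0).
      { apply (is_lim_comp exp _ p_infty 0 m_infty); [apply is_lim_exp_m|exact Hlin|].
        now exists 0. }
      replace (Finite (exp (c - 2 * a) / 2))
        with (Finite (exp (c - 2 * a) / 2 + -1 / 2 * 0)) by (f_equal; ring).
      apply is_lim_plus'; [apply is_lim_const|].
      exact (is_lim_scal_l _ (-1 / 2) _ 0 Hexp).
Qed.

(** * The Gaussian integral and [erfc] *)

Lemma exp_le x y : x <= y -> exp x <= exp y.
Proof. intros [Hlt|Heq]; [apply Rlt_le, exp_increasing, Hlt|subst; apply Rle_refl]. Qed.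

Definition gauss (u : R) : R := exp (- (u * u)).

Definition gauss_int (x : R) : R := RInt gauss 0 x.

(* Auxiliary function of the classical proof that [gauss_int] tends to [sqrt PI / 2]:
   [gauss_aux x + gauss_int x ^ 2] has zero derivative and equals [atan 1] at [0]. *)
Definition gauss_aux_integrand (x t : R) : R := exp (- (x * x) * (1 + t * t)) / (1 + t * t).

Definition gauss_aux (x : R) : R := RInt (gauss_aux_integrand x) 0 1.

Definition half_sqrt_PI : R := sqrt PI / 2.

Lemma continuous_gauss (x : R) : continuous gauss x.
Proof. apply ex_derive_continuous_R. unfold gauss. auto_derive. auto. Qed.

Lemma ex_RInt_gauss a b : ex_RInt gauss a b.
Proof. apply ex_RInt_continuous_R, continuous_gauss. Qed.

Lemma is_derive_gauss_int (x : R) : is_derive gauss_int x (gauss x).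
Proof.
  apply is_derive_RInt with (a := 0); [|apply continuous_gauss].
  apply filter_forall. intros b. apply (RInt_correct (V := R_CompleteNormedModule)).
  apply ex_RInt_gauss.
Qed.

Lemma gauss_int_scal_0_1 x : RInt (fun t => x * gauss (x * t)) 0 1 = gauss_int x.
Proof.
  unfold gauss_int. transitivity (RInt gauss (x * 0 + 0) (x * 1 + 0)).
  - rewrite <- (RInt_comp_lin gauss x 0 0 1) by apply ex_RInt_gauss.
    apply RInt_ext_R. intros t _. now rewrite Rplus_0_r.
  - f_equal; ring.
Qed.

Lemma is_derive_gauss_aux (x : R) : is_derive gauss_aux x (- 2 * gauss x * gauss_int x).
Proof.
  set (dF := fun u t => - 2 * u * exp (- (u * u) * (1 + t * t))).
  assert (HdF : forall u t : R, is_derive (fun z => gauss_aux_integrand z t) u (dF u t)).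
  { intros u t. unfold gauss_aux_integrand, dF. auto_derive; [nra|field; nra]. }
  assert (Hparam : is_derive gauss_aux x (RInt (dF x) 0 1)).
  { unfold gauss_aux.
    rewrite (RInt_ext_R _ (fun t => Derive (fun u => gauss_aux_integrand u t) x))
      by (intros t _; symmetry; apply is_derive_unique, HdF).
    apply (is_derive_RInt_param gauss_aux_integrand 0 1 x).
    - apply filter_forall. intros y t _. eexists. apply HdF.
    - intros t _. apply continuity_2d_pt_ext with dF.
      { intros u v. symmetry; apply is_derive_unique, HdF. }
      unfold dF. apply continuity_2d_pt_mult.
      + apply continuity_2d_pt_mult; [apply continuity_2d_pt_const|apply continuity_2d_pt_id1].
      + apply continuity_1d_2d_pt_comp with (f := exp) (g := fun u v => - (u * u) * (1 + v * v)).
        { apply derivable_continuous_pt, derivable_pt_exp. }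
        apply continuity_2d_pt_mult.
        * apply continuity_2d_pt_opp, continuity_2d_pt_mult; apply continuity_2d_pt_id1.
        * apply continuity_2d_pt_plus; [apply continuity_2d_pt_const|].
          apply continuity_2d_pt_mult; apply continuity_2d_pt_id2.
    - apply filter_forall. intros y. apply ex_RInt_continuous_R. intros z.
      apply ex_derive_continuous_R. unfold gauss_aux_integrand. auto_derive. nra. }
  replace (- 2 * gauss x * gauss_int x) with (RInt (dF x) 0 1); [exact Hparam|].
  rewrite <- gauss_int_scal_0_1, <- RInt_scal_R.
  - apply RInt_ext_R. intros t _. unfold dF, gauss.
    replace (- (x * x) * (1 + t * t)) with (- (x * x) + - ((x * t) * (x * t))) by ring.
    rewrite exp_plus. ring.
  - apply ex_RInt_continuous_R. intros t. apply ex_derive_continuous_R.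
    unfold gauss. auto_derive. auto.
Qed.

Lemma gauss_aux_0 : gauss_aux 0 = PI / 4.
Proof.
  unfold gauss_aux. rewrite (RInt_ext_R _ (fun t => / (1 + t * t))).
  2:{ intros t _. unfold gauss_aux_integrand.
      replace (- (0 * 0) * (1 + t * t)) with 0 by ring. rewrite exp_0. unfold Rdiv. ring. }
  rewrite (RInt_derive_R atan).
  - rewrite atan_1, atan_0. ring.
  - intros t. apply is_derive_Reals. replace (t * t) with (t ^ 2) by ring.
    apply derivable_pt_lim_atan.
  - intros t. apply ex_derive_continuous_R. auto_derive. nra.
Qed.

Lemma gauss_int_sq x : gauss_int x * gauss_int x + gauss_aux x = PI / 4.
Proof.
  set (F := fun y => gauss_int y * gauss_int y + gauss_aux y).
  assert (HF : forall y, is_derive F y 0).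
  { intros y. unfold F.
    replace 0 with (gauss y * gauss_int y + gauss_int y * gauss y + - 2 * gauss y * gauss_int y)
      by ring.
    apply (is_derive_plus (K := R_AbsRing) (V := R_NormedModule));
      [|apply is_derive_gauss_aux].
    apply (is_derive_mult (K := R_AbsRing)); try apply is_derive_gauss_int.
    intros; unfold mult; simpl; ring. }
  destruct (MVT_gen F 0 x (fun _ => 0)) as [c [_ Hc]].
  - intros; apply HF.
  - intros; apply derivable_continuous_pt, ex_derive_Reals_0. eexists; apply HF.
  - change (F x = PI / 4). rewrite <- gauss_aux_0.
    replace (gauss_aux 0) with (F 0); [lra|].
    unfold F, gauss_int. rewrite RInt_point. unfold zero; simpl. ring.
Qed.

Lemma gauss_int_opp x : gauss_int (- x) = - gauss_int x.
Proof.
  unfold gauss_int.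
  rewrite (RInt_ext_R gauss (fun u => gauss (- u)) 0 x)
    by (intros; unfold gauss; now rewrite Rmult_opp_opp).
  rewrite RInt_comp_opp_R, Ropp_0, Ropp_involutive by apply continuous_gauss.
  reflexivity.
Qed.

Lemma gauss_int_ge_0 x : 0 <= x -> 0 <= gauss_int x.
Proof.
  intros Hx. apply RInt_ge_0; auto using ex_RInt_gauss.
  intros; unfold gauss; apply Rlt_le, exp_pos.
Qed.

Lemma gauss_aux_bounds x : 0 <= gauss_aux x <= gauss x.
Proof.
  assert (Hex : ex_RInt (gauss_aux_integrand x) 0 1).
  { apply ex_RInt_continuous_R. intros t. apply ex_derive_continuous_R.
    unfold gauss_aux_integrand. auto_derive. nra. }
  unfold gauss_aux. split.
  - apply RInt_ge_0; auto; [lra|]. intros t _. unfold gauss_aux_integrand.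
    apply Rlt_le, Rdiv_lt_0_compat; [apply exp_pos|nra].
  - apply Rle_trans with (RInt (fun _ => gauss x) 0 1); [|rewrite RInt_const_R; lra].
    apply RInt_le; auto; [lra|apply ex_RInt_continuous_R; intros; apply continuous_const|].
    intros t Ht. unfold gauss_aux_integrand, gauss.
    assert (exp (- (x * x) * (1 + t * t)) <= exp (- (x * x)))
      by (apply exp_le; nra).
    assert (1 <= 1 + t * t) by nra.
    unfold Rdiv. apply Rle_trans with (exp (- (x * x) * (1 + t * t)) * 1); [|lra].
    apply Rmult_le_compat_l; [apply Rlt_le, exp_pos|].
    rewrite <- Rinv_1. apply Rinv_le_contravar; lra.
Qed.

Lemma half_sqrt_PI_sq : half_sqrt_PI * half_sqrt_PI = PI / 4.
Proof. unfold half_sqrt_PI. pose proof (sqrt_sqrt PI (Rlt_le _ _ PI_RGT_0)). nra. Qed.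

Lemma half_sqrt_PI_bounds : 1 / 2 <= half_sqrt_PI <= 1.
Proof.
  assert (HPI : 1 <= PI <= 2 * 2) by (pose proof PI_4; pose proof PI2_3_2; lra).
  assert (sqrt 1 <= sqrt PI <= sqrt (2 * 2)) by (split; apply sqrt_le_1_alt; lra).
  rewrite sqrt_1, sqrt_square in * by lra. unfold half_sqrt_PI. lra.
Qed.

Lemma gauss_int_tail x : 0 <= x ->
  0 <= half_sqrt_PI - gauss_int x <= gauss x / half_sqrt_PI.
Proof.
  intros Hx. pose proof (gauss_int_ge_0 x Hx). pose proof (gauss_int_sq x).
  pose proof (gauss_aux_bounds x). pose proof half_sqrt_PI_sq. pose proof half_sqrt_PI_bounds.
  assert (Hle : gauss_int x <= half_sqrt_PI) by nra.
  split; [lra|]. apply Rmult_le_reg_r with half_sqrt_PI; [lra|].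
  unfold Rdiv. rewrite Rmult_assoc, Rinv_l, Rmult_1_r by lra. nra.
Qed.

Lemma is_lim_gauss_int : is_lim gauss_int p_infty half_sqrt_PI.
Proof.
  pose proof half_sqrt_PI_bounds.
  apply is_lim_le_le_loc with (fun x => half_sqrt_PI - 2 / (1 + x)) (fun _ => half_sqrt_PI).
  - exists 1. intros x Hx. pose proof (gauss_int_tail x ltac:(lra)).
    assert (Hexp : 1 + x <= exp (x * x)) by (pose proof (exp_ineq1_le (x * x)); nra).
    split; [|lra]. assert (gauss x / half_sqrt_PI <= 2 / (1 + x)); [|lra].
    unfold gauss, Rdiv. rewrite exp_Ropp.
    apply Rle_trans with (2 * / exp (x * x)).
    + rewrite Rmult_comm. apply Rmult_le_compat_r; [apply Rlt_le, Rinv_0_lt_compat, exp_pos|].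
      rewrite <- (Rinv_inv 2). apply Rinv_le_contravar; lra.
    + apply Rmult_le_compat_l; [lra|]. apply Rinv_le_contravar; lra.
  - replace (Finite half_sqrt_PI) with (Finite (half_sqrt_PI - 2 * 0)) by (f_equal; ring).
    apply is_lim_minus'; [apply is_lim_const|].
    apply (is_lim_scal_l (fun x => / (1 + x)) 2 p_infty 0).
    apply (is_lim_inv (fun x => 1 + x) p_infty p_infty); [|easy].
    eapply is_lim_plus; [apply is_lim_const|apply is_lim_id|]. easy.
  - apply is_lim_const.
Qed.

Lemma is_int_to_infty_gauss a : is_int_to_infty gauss a (half_sqrt_PI - gauss_int a).
Proof.
  apply is_int_to_infty_iff. split; [intros; apply ex_RInt_gauss|].
  apply is_lim_ext with (fun b => gauss_int b + - gauss_int a).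
  - intros b. unfold gauss_int. rewrite (RInt_Chasles_R gauss 0 a b) by apply ex_RInt_gauss.
    ring.
  - apply is_lim_plus'; [apply is_lim_gauss_int|apply is_lim_const].
Qed.

Lemma gauss_int_le x : gauss_int x <= half_sqrt_PI.
Proof.
  pose proof half_sqrt_PI_bounds. destruct (Rle_dec 0 x) as [Hx|Hx].
  - pose proof (gauss_int_tail x Hx). lra.
  - replace x with (- - x) by ring. rewrite gauss_int_opp.
    pose proof (gauss_int_ge_0 (- x)). lra.
Qed.

Lemma erfc_gauss_int x : erfc x = 1 - gauss_int x / half_sqrt_PI.
Proof.
  unfold erfc. change (fun u => exp (- (u * u))) with gauss.
  rewrite (is_int_to_infty_unique _ x _ (is_int_to_infty_gauss x)).
  pose proof half_sqrt_PI_bounds. unfold half_sqrt_PI in *. field. lra.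
Qed.

Lemma erfc_tail_bounds x :
  half_sqrt_PI - gauss_int x <= erfc x <= 2 * (half_sqrt_PI - gauss_int x).
Proof.
  pose proof half_sqrt_PI_bounds. pose proof (gauss_int_le x).
  rewrite erfc_gauss_int.
  replace (1 - gauss_int x / half_sqrt_PI) with ((half_sqrt_PI - gauss_int x) * / half_sqrt_PI)
    by (field; lra).
  assert (1 <= / half_sqrt_PI <= 2).
  { split; [rewrite <- Rinv_1|rewrite <- (Rinv_inv 2)]; apply Rinv_le_contravar; lra. }
  split; nra.
Qed.

Lemma is_derive_erfc (x : R) : is_derive erfc x (- gauss x / half_sqrt_PI).
Proof.
  replace erfc with (fun x => 1 - gauss_int x / half_sqrt_PI)
    by (apply functional_extensionality; intros; symmetry; apply erfc_gauss_int).
  pose proof half_sqrt_PI_bounds.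
  auto_derive; [eexists; apply is_derive_gauss_int|].
  replace (Derive (fun y => gauss_int y) x) with (gauss x)
    by (symmetry; apply is_derive_unique, is_derive_gauss_int).
  field. lra.
Qed.

Lemma continuous_erfc (x : R) : continuous erfc x.
Proof. apply ex_derive_continuous_R. eexists. apply is_derive_erfc. Qed.

Lemma ex_RInt_erfc a b : ex_RInt erfc a b.
Proof. apply ex_RInt_continuous_R, continuous_erfc. Qed.

Lemma erfc_opp x : erfc (- x) = 2 - erfc x.
Proof.
  rewrite !erfc_gauss_int, gauss_int_opp. pose proof half_sqrt_PI_bounds. field. lra.
Qed.

Lemma erfc_le_1 x : 0 <= x -> erfc x <= 1.
Proof.
  intros Hx. rewrite erfc_gauss_int. pose proof half_sqrt_PI_bounds.
  pose proof (gauss_int_ge_0 x Hx).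
  assert (0 <= gauss_int x / half_sqrt_PI) by (apply Rdiv_le_0_compat; lra). lra.
Qed.

Lemma erfc_ge_1 x : x <= 0 -> 1 <= erfc x.
Proof.
  intros Hx. replace x with (- - x) by ring. rewrite erfc_opp.
  pose proof (erfc_le_1 (- x)). lra.
Qed.

Lemma erfc_le_exp_linear x : erfc x <= exp (1 - 2 * x).
Proof.
  pose proof (erfc_tail_bounds x).
  assert (half_sqrt_PI - gauss_int x <= exp (1 - 2 * x) / 2); [|lra].
  apply (is_int_to_infty_le gauss (fun u => exp (1 - 2 * u)) x);
    [apply is_int_to_infty_gauss|apply is_int_to_infty_exp_linear|].
  intros u _. unfold gauss. apply exp_le. pose proof (Rle_0_sqr (u - 1)). unfold Rsqr in *. lra.
Qed.

Lemma erfc_le_gauss x : 1 <= x -> erfc x <= gauss x.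
Proof.
  intros Hx.
  assert (Htail : half_sqrt_PI - gauss_int x <= exp ((2 * x - x * x) - 2 * x) / 2).
  { apply (is_int_to_infty_le gauss (fun u => exp ((2 * x - x * x) - 2 * u)) x);
      [apply is_int_to_infty_gauss|apply is_int_to_infty_exp_linear|].
    intros u Hu. unfold gauss. apply exp_le. nra. }
  replace ((2 * x - x * x) - 2 * x) with (- (x * x)) in Htail by ring.
  pose proof (erfc_tail_bounds x). unfold gauss. lra.
Qed.

Lemma erfc_ge_gauss_succ x : 0 <= x -> gauss (x + 1) <= erfc x.
Proof.
  intros Hx. pose proof (erfc_tail_bounds x).
  assert (gauss (x + 1) <= RInt gauss x (x + 1)).
  { apply Rle_trans with (RInt (fun _ => gauss (x + 1)) x (x + 1)); [rewrite RInt_const_R; lra|].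
    apply RInt_le; [lra|apply ex_RInt_continuous_R; intros; apply continuous_const
                   |apply ex_RInt_gauss|].
    intros u Hu. unfold gauss. apply exp_le. nra. }
  assert (RInt gauss x (x + 1) <= half_sqrt_PI - gauss_int x); [|lra].
  apply (RInt_le_is_int_to_infty gauss x); [apply is_int_to_infty_gauss| |lra].
  intros; unfold gauss; apply Rlt_le, exp_pos.
Qed.

Lemma erfc_pos x : 0 < erfc x.
Proof.
  destruct (Rle_dec 0 x) as [Hx|Hx].
  - pose proof (erfc_ge_gauss_succ x Hx). unfold gauss in *.
    pose proof (exp_pos (- ((x + 1) * (x + 1)))). lra.
  - pose proof (erfc_ge_1 x). lra.
Qed.

Lemma erfc_le_2 x : erfc x <= 2.
Proof. replace x with (- - x) by ring. rewrite erfc_opp. pose proof (erfc_pos (- x)). lra. Qed.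

(** * The annealed large deviation function *)

Lemma is_int_to_infty_erfc_0 : is_int_to_infty erfc 0 (h 0).
Proof.
  assert (Hexp := is_int_to_infty_exp_linear 1 0).
  destruct (is_int_to_infty_bounded erfc 0 (exp (1 - 2 * 0) / 2)) as [l Hl].
  - intros; apply ex_RInt_erfc.
  - intros; apply Rlt_le, erfc_pos.
  - intros b Hb. apply Rle_trans with (RInt (fun u => exp (1 - 2 * u)) 0 b).
    + apply RInt_le; auto using ex_RInt_erfc; [|intros; apply erfc_le_exp_linear].
      apply is_int_to_infty_iff in Hexp. now apply Hexp.
    + apply (RInt_le_is_int_to_infty _ 0); auto. intros; apply Rlt_le, exp_pos.
  - unfold h. now rewrite (is_int_to_infty_unique _ _ _ Hl).
Qed.

Lemma h_Chasles a : h a = RInt erfc a 0 + h 0.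
Proof.
  apply is_int_to_infty_unique, is_int_to_infty_Chasles;
    [apply ex_RInt_erfc|apply is_int_to_infty_erfc_0].
Qed.

Lemma h_bounds v : 0 <= v -> 0 <= h v <= h 0.
Proof.
  intros Hv.
  assert (Hpos : forall x, 0 <= x -> 0 <= erfc x) by (intros; apply Rlt_le, erfc_pos).
  rewrite h_Chasles, RInt_swap_R by apply ex_RInt_erfc.
  assert (0 <= RInt erfc 0 v).
  { apply RInt_ge_0; [exact Hv|apply ex_RInt_erfc|]. intros; apply Hpos; lra. }
  assert (RInt erfc 0 v <= h 0).
  { apply (RInt_le_is_int_to_infty erfc 0); [apply is_int_to_infty_erfc_0|exact Hpos|exact Hv]. }
  lra.
Qed.

Lemma h_opp v : h (- v) = 2 * v + h v.
Proof.
  assert (Hsym : RInt erfc (- v) 0 = RInt (fun u => 2 + -1 * erfc u) 0 v).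
  { rewrite <- (RInt_ext_R (fun u => erfc (- u)) (fun u => 2 + -1 * erfc u))
      by (intros; rewrite erfc_opp; ring).
    rewrite RInt_comp_opp_R, Ropp_0, RInt_swap_R by (apply ex_RInt_erfc || apply continuous_erfc).
    reflexivity. }
  rewrite (h_Chasles (- v)), (h_Chasles v), Hsym, (RInt_swap_R erfc 0 v).
  rewrite RInt_plus_R, RInt_scal_R, RInt_const_R.
  - ring.
  - apply ex_RInt_erfc.
  - apply ex_RInt_continuous_R. intros; apply continuous_const.
  - apply (ex_RInt_scal (V := R_NormedModule)), ex_RInt_erfc.
  - apply ex_RInt_erfc.
Qed.

Lemma sqrt_diff_sq_approx v Q : 0 <= Q <= v ->
  Rabs ((sqrt (2 * v + Q) - sqrt Q) ^ 2 - 2 * v) <= 2 * sqrt (3 * v * Q).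
Proof.
  intros HQ.
  assert (HS : sqrt (2 * v + Q) * sqrt (2 * v + Q) = 2 * v + Q) by (apply sqrt_sqrt; lra).
  assert (HT : sqrt Q * sqrt Q = Q) by (apply sqrt_sqrt; lra).
  assert (HTS : sqrt Q <= sqrt (2 * v + Q)) by (apply sqrt_le_1_alt; lra).
  assert (HST : sqrt (2 * v + Q) * sqrt Q <= sqrt (3 * v * Q)).
  { rewrite <- sqrt_mult by lra. apply sqrt_le_1_alt. nra. }
  pose proof (sqrt_pos Q). apply Rabs_le. nra.
Qed.

Lemma phi_a_sym rho sigma xi :
  phi_a rho sigma xi =
  rho * sigma / 2 * (sqrt (h (- (Rabs xi / sigma))) - sqrt (h (Rabs xi / sigma))) ^ 2.
Proof.
  unfold phi_a. destruct (Rle_or_lt 0 xi).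
  - rewrite Rabs_right by lra. replace (- xi / sigma) with (- (xi / sigma)) by (unfold Rdiv; ring).
    ring.
  - rewrite Rabs_left by lra. replace (- (- xi / sigma)) with (xi / sigma) by (unfold Rdiv; ring).
    ring.
Qed.

Lemma annealed_equiv rho sigma : 0 < rho -> 0 < sigma ->
  equiv_at_infty (phi_a rho sigma) (fun xi => rho * Rabs xi).
Proof.
  intros Hrho Hsigma eps Heps.
  set (c := h 0). assert (Hc : 0 <= c) by (apply (h_bounds 0); lra).
  assert (Hce : 0 <= 3 * c / (eps * eps)) by (apply Rdiv_le_0_compat; nra).
  exists (sigma * (1 + c + 3 * c / (eps * eps))). intros xi Hxi.
  set (v := Rabs xi / sigma).
  assert (Hxv : Rabs xi = sigma * v) by (unfold v; field; lra).
  rewrite Hxv in Hxi. apply Rmult_lt_reg_l in Hxi; [|exact Hsigma].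
  assert (Hsmall : 3 * c < eps * eps * v).
  { apply Rle_lt_trans with (eps * eps * (3 * c / (eps * eps))); [right; field; lra|].
    apply Rmult_lt_compat_l; [nra|lra]. }
  rewrite phi_a_sym. fold v. rewrite h_opp, Hxv.
  destruct (h_bounds v ltac:(lra)) as [HQ0 HQc]. fold c in HQc.
  replace (rho * sigma / 2 * (sqrt (2 * v + h v) - sqrt (h v)) ^ 2 / (rho * (sigma * v)) - 1)
    with (((sqrt (2 * v + h v) - sqrt (h v)) ^ 2 - 2 * v) / (2 * v)) by (field; lra).
  rewrite Rabs_div, (Rabs_right (2 * v)) by lra. apply Rlt_div_l; [lra|].
  eapply Rle_lt_trans; [apply sqrt_diff_sq_approx; split; lra|].
  assert (sqrt (3 * v * h v) < eps * v); [|lra].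
  rewrite <- (sqrt_square (eps * v)) by nra. apply sqrt_lt_1_alt. split; nra.
Qed.

(** * Convexity and Taylor bounds for real functions *)

Definition convex (f : R -> R) : Prop :=
  forall a b t, 0 <= t <= 1 -> f (t * a + (1 - t) * b) <= t * f a + (1 - t) * f b.

Section Derivatives.

Variables f f' : R -> R.
Hypothesis Hf' : forall x, is_derive f x (f' x).

Lemma MVT_is_derive a b :
  exists c, Rmin a b <= c <= Rmax a b /\ f b - f a = f' c * (b - a).
Proof.
  apply MVT_gen; [intros; apply Hf'|].
  intros x _. apply derivable_continuous_pt, ex_derive_Reals_0. eexists; apply Hf'.
Qed.

Lemma incr_of_derive_nonneg : (forall x, 0 <= f' x) -> forall a b, a <= b -> f a <= f b.
Proof.
  intros Hpos a b Hab. destruct (MVT_is_derive a b) as [c [_ Hc]].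
  pose proof (Hpos c). nra.
Qed.

Lemma lipschitz_of_derive_bound B K d :
  (forall u, B - Rabs d <= u <= B + Rabs d -> Rabs (f' u) <= K) ->
  Rabs (f (B + d) - f B) <= K * Rabs d.
Proof.
  intros HK. destruct (MVT_is_derive B (B + d)) as [c [Hc ->]].
  replace (B + d - B) with d by ring. rewrite Rabs_mult.
  apply Rmult_le_compat_r; [apply Rabs_pos|]. apply HK.
  unfold Rmin, Rmax in Hc. destruct (Rle_dec B (B + d)); unfold Rabs; destruct (Rcase_abs d); lra.
Qed.

Lemma convex_of_derive_incr : (forall a b, a <= b -> f' a <= f' b) -> convex f.
Proof.
  intros Hincr.
  assert (Hle : forall a b t, a <= b -> 0 <= t <= 1 ->
            f (t * a + (1 - t) * b) <= t * f a + (1 - t) * f b).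
  { intros a b t Hab Ht. set (z := t * a + (1 - t) * b).
    assert (Hz : a <= z <= b) by (unfold z; nra).
    destruct (MVT_is_derive a z) as [c1 [Hc1 E1]].
    destruct (MVT_is_derive z b) as [c2 [Hc2 E2]].
    rewrite Rmin_left, Rmax_right in Hc1, Hc2 by lra.
    assert (f' c1 <= f' c2) by (apply Hincr; lra).
    assert (t * (f z - f a) <= (1 - t) * (f b - f z)); [|lra].
    rewrite E1, E2.
    replace (z - a) with ((1 - t) * (b - a)) by (unfold z; ring).
    replace (b - z) with (t * (b - a)) by (unfold z; ring).
    assert (0 <= t * (1 - t) * (b - a)) by (apply Rmult_le_pos; nra). nra. }
  intros a b t Ht. destruct (Rle_dec a b); [now apply Hle|].
  replace (t * a + (1 - t) * b) with ((1 - t) * b + (1 - (1 - t)) * a) by ring.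
  replace (t * f a + (1 - t) * f b) with ((1 - t) * f b + (1 - (1 - t)) * f a) by ring.
  apply Hle; lra.
Qed.

Lemma convex_tangent_le B : convex f -> forall y, f B + f' B * (y - B) <= f y.
Proof.
  intros Hc y. apply Rnot_lt_le. intros Hlt.
  set (gap := f B + f' B * (y - B) - f y).
  assert (Hgap : 0 < gap) by (unfold gap; lra).
  assert (Hy : 0 < Rabs (y - B)) by (apply Rabs_pos_lt; intros Hy; unfold gap in Hgap;
    replace y with B in * by lra; lra).
  destruct (proj1 (is_derive_Reals f B (f' B)) (Hf' B) (gap / Rabs (y - B))) as [dl Hdl];
    [apply Rdiv_lt_0_compat; lra|].
  set (t := Rmin 1 (dl / (2 * Rabs (y - B)))).
  assert (Ht0 : 0 < t) by (apply Rmin_pos; [lra|apply Rdiv_lt_0_compat; [apply cond_pos|lra]]).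
  assert (Ht1 : t <= 1) by apply Rmin_l.
  assert (Htdl : t * Rabs (y - B) < dl).
  { pose proof (cond_pos dl). apply Rle_lt_trans with (dl / (2 * Rabs (y - B)) * Rabs (y - B)).
    - apply Rmult_le_compat_r; [lra|apply Rmin_r].
    - replace (dl / (2 * Rabs (y - B)) * Rabs (y - B)) with (dl / 2) by (field; lra). lra. }
  set (k := t * (y - B)).
  assert (Hk : Rabs k = t * Rabs (y - B)) by (unfold k; rewrite Rabs_mult, Rabs_right; lra).
  assert (Hk0 : k <> 0) by (intros Hk0; rewrite Hk0, Rabs_R0 in Hk; nra).
  specialize (Hdl k Hk0 ltac:(lra)).
  assert (Hconv : f (B + k) <= (1 - t) * f B + t * f y).
  { replace (B + k) with (t * y + (1 - t) * B) by (unfold k; ring).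
    pose proof (Hc y B t ltac:(lra)). lra. }
  assert (Hneg : f (B + k) - f B - f' B * k <= - (t * gap)).
  { replace (f' B * k) with (t * (f' B * (y - B))) by (unfold k; ring). unfold gap. lra. }
  assert (Hq : gap / Rabs (y - B) <= Rabs ((f (B + k) - f B) / k - f' B)).
  { replace ((f (B + k) - f B) / k - f' B) with ((f (B + k) - f B - f' B * k) / k)
      by (field; auto).
    assert (0 < t * gap) by (apply Rmult_lt_0_compat; lra).
    rewrite Rabs_div, Hk, (Rabs_left1 (f (B + k) - f B - f' B * k)) by (exact Hk0 || lra).
    rewrite <- Rle_div_r by (apply Rmult_lt_0_compat; lra).
    replace (gap / Rabs (y - B) * (t * Rabs (y - B))) with (t * gap) by (field; lra). lra. }
  lra.
Qed.

End Derivatives.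

Lemma taylor2_bound (f f' f'' : R -> R) B K d :
  (forall x, is_derive f x (f' x)) -> (forall x, is_derive f' x (f'' x)) ->
  (forall u, B - Rabs d <= u <= B + Rabs d -> Rabs (f'' u) <= K) ->
  Rabs (f (B + d) - f B - d * f' B) <= K * (d * d).
Proof.
  intros Hf Hf' HK.
  assert (HK0 : 0 <= K).
  { pose proof (Rabs_pos d). pose proof (Rabs_pos (f'' B)).
    assert (Rabs (f'' B) <= K) by (apply HK; lra). lra. }
  set (g := fun s => f (B + s) - f B - s * f' B).
  set (g' := fun s => f' (B + s) - f' B).
  assert (Hg : forall s, is_derive g s (g' s)).
  { intros s. unfold g, g'. auto_derive; [eexists; apply Hf|].
    replace (Derive (fun x => f x) (B + s)) with (f' (B + s))
      by (symmetry; apply is_derive_unique, Hf).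
    ring. }
  assert (Hb : Rabs (g (0 + d) - g 0) <= K * Rabs d * Rabs d).
  { apply (lipschitz_of_derive_bound g g' Hg). intros u Hu.
    assert (Hud : Rabs u <= Rabs d) by (apply Rabs_le; lra).
    apply Rle_trans with (K * Rabs u); [|apply Rmult_le_compat_l; auto].
    unfold g'. apply (lipschitz_of_derive_bound f' f'' Hf'). intros v Hv. apply HK. lra. }
  unfold g in Hb. rewrite Rplus_0_l, !Rplus_0_r, Rmult_0_l, Rminus_0_r, Rminus_diag, Rminus_0_r
    in Hb.
  replace (K * (d * d)) with (K * Rabs d * Rabs d); [exact Hb|].
  rewrite Rmult_assoc, <- Rabs_mult, Rabs_right by nra. ring.
Qed.

(** * The integrand of [I] *)

Definition sinh_half_sq (B : R) : R := (cosh B - 1) / 2.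

(* [I B] integrates [I_integrand (erfc_prod eta) B] over [eta >= 0]; the first argument
   [e] stands for [erfc eta * erfc (- eta)], which lies in (0, 1]. *)
Definition I_integrand (e B : R) : R := ln (1 + e * sinh_half_sq B).

Definition I_integrand_d (e B : R) : R := e * sinh B / 2 / (1 + e * sinh_half_sq B).

Definition I_integrand_d2 (e B : R) : R :=
  e * ((2 - e) * cosh B + e) / ((2 + e * (cosh B - 1)) * (2 + e * (cosh B - 1))).

Lemma cosh_ge_1 B : 1 <= cosh B.
Proof.
  unfold cosh. rewrite exp_Ropp. pose proof (exp_pos B).
  assert (0 <= (exp B - 1) * (exp B - 1) / exp B)
    by (apply Rdiv_le_0_compat; [apply Rle_0_sqr|lra]).
  replace ((exp B + / exp B) / 2) with (1 + (exp B - 1) * (exp B - 1) / exp B / 2)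
    by (field; lra). lra.
Qed.

Lemma sinh_half_sq_ge_0 B : 0 <= sinh_half_sq B.
Proof. unfold sinh_half_sq. pose proof (cosh_ge_1 B). lra. Qed.

Lemma sinh_half_sq_eq B : sinh (B / 2) ^ 2 = sinh_half_sq B.
Proof.
  unfold sinh, sinh_half_sq, cosh.
  assert (E1 : exp B = exp (B / 2) * exp (B / 2)) by (rewrite <- exp_plus; f_equal; field).
  assert (E2 : exp (- B) = / exp (B / 2) * / exp (B / 2))
    by (rewrite <- !exp_Ropp, <- exp_plus; f_equal; field).
  rewrite E1, E2, exp_Ropp. pose proof (exp_pos (B / 2)). field. lra.
Qed.

Lemma is_derive_I_integrand e B : 0 <= e -> is_derive (I_integrand e) B (I_integrand_d e B).
Proof.
  intros He. pose proof (sinh_half_sq_ge_0 B).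
  unfold I_integrand, I_integrand_d, sinh_half_sq, sinh, cosh in *.
  auto_derive; [nra|field; nra].
Qed.

Lemma is_derive_I_integrand_d e B : 0 <= e -> e <= 1 ->
  is_derive (I_integrand_d e) B (I_integrand_d2 e B).
Proof.
  intros He He1. pose proof (sinh_half_sq_ge_0 B). pose proof (cosh_ge_1 B).
  unfold I_integrand_d, I_integrand_d2, sinh_half_sq, sinh, cosh in *.
  auto_derive; [nra|].
  rewrite !exp_Ropp in *. pose proof (exp_pos B). field. split; nra.
Qed.

Lemma I_integrand_d2_bounds e B : 0 <= e -> e <= 1 -> 0 <= I_integrand_d2 e B <= e * cosh B.
Proof.
  intros He He1. pose proof (cosh_ge_1 B). unfold I_integrand_d2.
  set (C := cosh B) in *. set (D := 2 + e * (C - 1)).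
  assert (HD : 2 <= D) by (unfold D; nra).
  assert (HN : 0 <= e * ((2 - e) * C + e)) by (apply Rmult_le_pos; nra).
  split; [apply Rdiv_le_0_compat; nra|].
  rewrite Rle_div_l by nra.
  assert (e * ((2 - e) * C + e) <= e * C * 3) by nra.
  assert (e * C * 3 <= e * C * (D * D)) by (apply Rmult_le_compat_l; nra). lra.
Qed.

Lemma I_integrand_d_abs e B : 0 <= e -> Rabs (I_integrand_d e B) <= e * cosh B.
Proof.
  intros He. pose proof (sinh_half_sq_ge_0 B).
  assert (Hsinh : Rabs (sinh B) <= cosh B).
  { unfold sinh, cosh. pose proof (exp_pos B). pose proof (exp_pos (- B)).
    apply Rabs_le. split; lra. }
  assert (Hden : 1 <= 2 * (1 + e * sinh_half_sq B)) by nra.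
  unfold I_integrand_d.
  replace (e * sinh B / 2 / (1 + e * sinh_half_sq B))
    with (e * sinh B / (2 * (1 + e * sinh_half_sq B))) by (field; nra).
  rewrite Rabs_div, Rabs_mult, (Rabs_right e), (Rabs_right (2 * _)) by lra.
  rewrite Rle_div_l by lra.
  assert (e * Rabs (sinh B) <= e * cosh B) by (apply Rmult_le_compat_l; lra).
  assert (e * cosh B * 1 <= e * cosh B * (2 * (1 + e * sinh_half_sq B))); [|lra].
  pose proof (cosh_ge_1 B). apply Rmult_le_compat_l; nra.
Qed.

Lemma cosh_le_exp_abs B u : Rabs (u - B) <= 1 -> cosh u <= exp (Rabs B + 1).
Proof.
  intros Hu. apply Rabs_le_between in Hu. unfold cosh.
  assert (exp u <= exp (Rabs B + 1)) by (apply exp_le; unfold Rabs; destruct (Rcase_abs B); lra).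
  assert (exp (- u) <= exp (Rabs B + 1))
    by (apply exp_le; unfold Rabs; destruct (Rcase_abs B); lra).
  lra.
Qed.

Lemma I_integrand_taylor e B d : 0 <= e -> e <= 1 -> Rabs d <= 1 ->
  Rabs (I_integrand e (B + d) - I_integrand e B - d * I_integrand_d e B)
    <= e * exp (Rabs B + 1) * (d * d).
Proof.
  intros He He1 Hd.
  apply taylor2_bound with (I_integrand_d2 e);
    [intros; now apply is_derive_I_integrand|intros; now apply is_derive_I_integrand_d|].
  intros u Hu. destruct (I_integrand_d2_bounds e u He He1). rewrite Rabs_right by lra.
  apply Rle_trans with (e * cosh u); [lra|]. apply Rmult_le_compat_l; [lra|].
  apply cosh_le_exp_abs, Rabs_le. lra.
Qed.

Lemma I_integrand_d_lipschitz e B d : 0 <= e -> e <= 1 -> Rabs d <= 1 ->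
  Rabs (I_integrand_d e (B + d) - I_integrand_d e B) <= e * exp (Rabs B + 1) * Rabs d.
Proof.
  intros He He1 Hd.
  apply lipschitz_of_derive_bound with (I_integrand_d2 e);
    [intros; now apply is_derive_I_integrand_d|].
  intros u Hu. destruct (I_integrand_d2_bounds e u He He1). rewrite Rabs_right by lra.
  apply Rle_trans with (e * cosh u); [lra|]. apply Rmult_le_compat_l; [lra|].
  apply cosh_le_exp_abs, Rabs_le. lra.
Qed.

Lemma convex_I_integrand e : 0 <= e -> e <= 1 -> convex (I_integrand e).
Proof.
  intros He He1.
  apply (convex_of_derive_incr _ (I_integrand_d e)); [intros; now apply is_derive_I_integrand|].
  apply (incr_of_derive_nonneg _ (I_integrand_d2 e)); [intros; now apply is_derive_I_integrand_d|].
  intros; now apply I_integrand_d2_bounds.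
Qed.

Lemma I_integrand_bounds e B : 0 <= e -> 0 <= I_integrand e B <= e * sinh_half_sq B.
Proof.
  intros He. pose proof (sinh_half_sq_ge_0 B). unfold I_integrand.
  assert (0 <= e * sinh_half_sq B) by nra. split.
  - rewrite <- ln_1. apply ln_le; lra.
  - rewrite <- (ln_exp (e * sinh_half_sq B)) at 2. apply ln_le; [lra|apply exp_ineq1_le].
Qed.

(** * The function [I], its derivative and convexity *)

Definition erfc_prod (x : R) : R := erfc x * erfc (- x).

Lemma erfc_prod_pos x : 0 < erfc_prod x.
Proof. unfold erfc_prod. pose proof (erfc_pos x). pose proof (erfc_pos (- x)). nra. Qed.

Lemma erfc_prod_le_1 x : erfc_prod x <= 1.
Proof.
  unfold erfc_prod. rewrite erfc_opp. pose proof (Rle_0_sqr (erfc x - 1)). unfold Rsqr in *.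
  nra.
Qed.

Lemma erfc_prod_le_exp_linear x : erfc_prod x <= 2 * exp (1 - 2 * x).
Proof.
  unfold erfc_prod. pose proof (erfc_le_exp_linear x). pose proof (erfc_pos x).
  pose proof (erfc_le_2 (- x)). pose proof (erfc_pos (- x)). nra.
Qed.

Lemma erfc_prod_le_gauss x : 1 <= x -> erfc_prod x <= 2 * gauss x.
Proof.
  intros Hx. unfold erfc_prod. pose proof (erfc_le_gauss x Hx). pose proof (erfc_pos x).
  pose proof (erfc_le_2 (- x)). pose proof (erfc_pos (- x)). nra.
Qed.

Lemma erfc_prod_ge_gauss_succ x : 0 <= x -> gauss (x + 1) <= erfc_prod x.
Proof.
  intros Hx. unfold erfc_prod. pose proof (erfc_ge_gauss_succ x Hx).
  pose proof (erfc_ge_1 (- x) ltac:(lra)). unfold gauss in *.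
  pose proof (exp_pos (- ((x + 1) * (x + 1)))). nra.
Qed.

Lemma ex_derive_erfc_prod (x : R) : ex_derive erfc_prod x.
Proof. unfold erfc_prod. auto_derive. repeat split; eexists; apply is_derive_erfc. Qed.

Lemma continuous_I_integrand B (x : R) : continuous (fun eta => I_integrand (erfc_prod eta) B) x.
Proof.
  apply ex_derive_continuous_R. unfold I_integrand.
  pose proof (erfc_prod_pos x). pose proof (sinh_half_sq_ge_0 B).
  auto_derive. split; [apply ex_derive_erfc_prod|split; [nra|auto]].
Qed.

Lemma continuous_I_integrand_d B (x : R) :
  continuous (fun eta => I_integrand_d (erfc_prod eta) B) x.
Proof.
  apply ex_derive_continuous_R. unfold I_integrand_d.
  pose proof (erfc_prod_pos x). pose proof (sinh_half_sq_ge_0 B).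
  auto_derive. repeat split; try apply ex_derive_erfc_prod; nra.
Qed.

Lemma is_int_to_infty_erfc_prod_bound c :
  is_int_to_infty (fun eta => c * (2 * exp (1 - 2 * eta))) 0 (c * exp 1).
Proof.
  replace (c * exp 1) with (c * 2 * (exp (1 - 2 * 0) / 2))
    by (replace (1 - 2 * 0) with 1 by ring; field).
  apply is_int_to_infty_ext with (fun eta => c * 2 * exp (1 - 2 * eta)); [intros; ring|].
  apply is_int_to_infty_scal, is_int_to_infty_exp_linear.
Qed.

Section ErfcProdDominated.

Variables (g : R -> R) (c : R).
Hypothesis Hc : 0 <= c.
Hypothesis Hg : forall x, 0 <= x -> Rabs (g x) <= c * erfc_prod x.

Lemma erfc_prod_dominated_bound x : 0 <= x -> Rabs (g x) <= c * (2 * exp (1 - 2 * x)).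
Proof.
  intros Hx. apply Rle_trans with (c * erfc_prod x); [now apply Hg|].
  apply Rmult_le_compat_l; [exact Hc|apply erfc_prod_le_exp_linear].
Qed.

Lemma is_int_to_infty_erfc_prod_dominated :
  (forall x, continuous g x) -> exists l, is_int_to_infty g 0 l.
Proof.
  intros Hcont.
  apply (is_int_to_infty_dominated g (fun x => c * (2 * exp (1 - 2 * x))) 0 (c * exp 1)).
  - intros; now apply ex_RInt_continuous_R.
  - exact erfc_prod_dominated_bound.
  - apply is_int_to_infty_erfc_prod_bound.
Qed.

Lemma erfc_prod_dominated_abs_le l : is_int_to_infty g 0 l -> Rabs l <= c * exp 1.
Proof.
  intros Hl. apply (is_int_to_infty_abs_le g _ 0 l _ Hl (is_int_to_infty_erfc_prod_bound c)).
  exact erfc_prod_dominated_bound.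
Qed.

End ErfcProdDominated.

Lemma is_int_to_infty_I B : is_int_to_infty (fun eta => I_integrand (erfc_prod eta) B) 0 (I B).
Proof.
  destruct (is_int_to_infty_erfc_prod_dominated (fun eta => I_integrand (erfc_prod eta) B)
              (sinh_half_sq B) (sinh_half_sq_ge_0 B)) as [l Hl].
  - intros x Hx. pose proof (erfc_prod_pos x).
    destruct (I_integrand_bounds (erfc_prod x) B); [lra|].
    rewrite Rabs_right by lra. lra.
  - apply continuous_I_integrand.
  - unfold I.
    replace (fun eta => ln (1 + sinh (B / 2) ^ 2 * erfc eta * erfc (- eta)))
      with (fun eta => I_integrand (erfc_prod eta) B)
      by (apply functional_extensionality; intros eta; unfold I_integrand, erfc_prod;
          rewrite sinh_half_sq_eq; f_equal; ring).
    now rewrite (is_int_to_infty_unique _ _ _ Hl).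
Qed.

Definition dI (B : R) : R := Int_to_infty (fun eta => I_integrand_d (erfc_prod eta) B) 0.

Lemma is_int_to_infty_dI B :
  is_int_to_infty (fun eta => I_integrand_d (erfc_prod eta) B) 0 (dI B).
Proof.
  destruct (is_int_to_infty_erfc_prod_dominated (fun eta => I_integrand_d (erfc_prod eta) B)
              (cosh B)) as [l Hl].
  - pose proof (cosh_ge_1 B). lra.
  - intros x Hx. rewrite Rmult_comm.
    apply I_integrand_d_abs, Rlt_le, erfc_prod_pos.
  - apply continuous_I_integrand_d.
  - unfold dI. now rewrite (is_int_to_infty_unique _ _ _ Hl).
Qed.

Lemma I_taylor B d : Rabs d <= 1 ->
  Rabs (I (B + d) - I B - d * dI B) <= exp (Rabs B + 1) * (d * d) * exp 1.
Proof.
  intros Hd.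
  apply (erfc_prod_dominated_abs_le
           (fun eta => I_integrand (erfc_prod eta) (B + d) - I_integrand (erfc_prod eta) B
                       - d * I_integrand_d (erfc_prod eta) B)).
  - pose proof (exp_pos (Rabs B + 1)). nra.
  - intros x _. pose proof (erfc_prod_pos x). pose proof (erfc_prod_le_1 x).
    rewrite (Rmult_comm _ (erfc_prod x)), <- Rmult_assoc.
    apply I_integrand_taylor; lra.
  - apply is_int_to_infty_minus; [apply is_int_to_infty_minus; apply is_int_to_infty_I|].
    apply is_int_to_infty_scal, is_int_to_infty_dI.
Qed.

Lemma dI_lipschitz B d : Rabs d <= 1 ->
  Rabs (dI (B + d) - dI B) <= exp (Rabs B + 1) * Rabs d * exp 1.
Proof.
  intros Hd.
  apply (erfc_prod_dominated_abs_le
           (fun eta => I_integrand_d (erfc_prod eta) (B + d) - I_integrand_d (erfc_prod eta) B)).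
  - pose proof (exp_pos (Rabs B + 1)). pose proof (Rabs_pos d). nra.
  - intros x _. pose proof (erfc_prod_pos x). pose proof (erfc_prod_le_1 x).
    rewrite (Rmult_comm _ (erfc_prod x)), <- Rmult_assoc.
    apply I_integrand_d_lipschitz; lra.
  - apply is_int_to_infty_minus; apply is_int_to_infty_dI.
Qed.

Lemma is_derive_I B : derivable_pt_lim I B (dI B).
Proof.
  intros eps Heps. set (K := exp (Rabs B + 1) * exp 1).
  assert (HK : 0 < K) by (apply Rmult_lt_0_compat; apply exp_pos).
  assert (Hdelta : 0 < Rmin 1 (eps / K)) by (apply Rmin_pos; [lra|apply Rdiv_lt_0_compat; lra]).
  exists (mkposreal _ Hdelta). intros d Hd0 Hd. simpl in Hd.
  assert (Hd1 : Rabs d <= 1) by (apply Rlt_le, Rlt_le_trans with (1 := Hd), Rmin_l).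
  assert (HdK : Rabs d * K < eps).
  { apply Rlt_div_r; [lra|]. apply Rlt_le_trans with (1 := Hd), Rmin_r. }
  pose proof (I_taylor B d Hd1) as HT.
  replace ((I (B + d) - I B) / d - dI B) with ((I (B + d) - I B - d * dI B) / d)
    by (field; auto).
  assert (Hpos : 0 < Rabs d) by (apply Rabs_pos_lt; auto).
  rewrite Rabs_div by auto. apply Rlt_div_l; [lra|].
  replace (exp (Rabs B + 1) * (d * d) * exp 1) with (Rabs d * K * Rabs d) in HT
    by (unfold K; replace (d * d) with (Rabs d * Rabs d)
          by (rewrite <- Rabs_mult; apply Rabs_right; nra); ring).
  nra.
Qed.

Lemma continuous_dI : continuity dI.
Proof.
  intros B eps Heps. set (K := exp (Rabs B + 1) * exp 1).
  assert (HK : 0 < K) by (apply Rmult_lt_0_compat; apply exp_pos).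
  exists (Rmin 1 (eps / K)). split; [apply Rmin_pos; [lra|apply Rdiv_lt_0_compat; lra]|].
  intros x [_ Hx]. simpl in *. unfold R_dist in *.
  assert (Hx1 : Rabs (x - B) <= 1) by (apply Rlt_le, Rlt_le_trans with (1 := Hx), Rmin_l).
  assert (HxK : Rabs (x - B) * K < eps).
  { apply Rlt_div_r; [lra|]. apply Rlt_le_trans with (1 := Hx), Rmin_r. }
  pose proof (dI_lipschitz B (x - B) Hx1) as HL. replace (B + (x - B)) with x in HL by ring.
  unfold K in HxK. lra.
Qed.

Lemma convex_I : convex I.
Proof.
  intros a b t Ht.
  apply (is_int_to_infty_le (fun eta => I_integrand (erfc_prod eta) (t * a + (1 - t) * b))
           (fun eta => t * I_integrand (erfc_prod eta) a
                       + (1 - t) * I_integrand (erfc_prod eta) b) 0).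
  - apply is_int_to_infty_I.
  - apply is_int_to_infty_plus; apply is_int_to_infty_scal, is_int_to_infty_I.
  - intros x _. pose proof (erfc_prod_pos x). pose proof (erfc_prod_le_1 x).
    apply convex_I_integrand; lra.
Qed.

Lemma I_ge_0 B : 0 <= I B.
Proof.
  pose proof (is_int_to_infty_I B) as HI. apply is_int_to_infty_iff in HI as [Hex Hlim].
  apply (is_lim_le_loc (fun _ => 0) (fun b => RInt (fun eta => I_integrand (erfc_prod eta) B) 0 b)
           p_infty 0 (I B)); [|apply is_lim_const|exact Hlim].
  exists 0. intros b Hb. apply RInt_ge_0; [lra|apply Hex; lra|].
  intros x _. apply I_integrand_bounds, Rlt_le, erfc_prod_pos.
Qed.

Lemma I_0 : I 0 = 0.
Proof.
  rewrite <- (is_int_to_infty_unique _ _ _ (is_int_to_infty_I 0)).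
  apply is_int_to_infty_unique, (is_int_to_infty_ext (fun _ => 0)); [|apply is_int_to_infty_0].
  intros x _. unfold I_integrand, sinh_half_sq. rewrite cosh_0.
  replace (1 + erfc_prod x * ((1 - 1) / 2)) with 1 by field. now rewrite ln_1.
Qed.

Lemma dI_0 : dI 0 = 0.
Proof.
  apply is_int_to_infty_unique, (is_int_to_infty_ext (fun _ => 0)); [|apply is_int_to_infty_0].
  intros x _. unfold I_integrand_d, sinh. rewrite Ropp_0. unfold Rminus. rewrite Rplus_opp_r.
  unfold Rdiv. ring.
Qed.

(** * Cubic growth of [I] *)

Lemma sinh_half_sq_le_exp B : 0 <= B -> sinh_half_sq B <= exp B / 4.
Proof.
  intros HB. unfold sinh_half_sq, cosh.
  assert (exp (- B) <= 1) by (rewrite <- exp_0; apply exp_le; lra). lra.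
Qed.

Lemma sinh_half_sq_ge_exp B : 4 <= B -> exp B / 8 <= sinh_half_sq B.
Proof.
  intros HB. unfold sinh_half_sq, cosh. pose proof (exp_pos (- B)).
  pose proof (exp_ineq1_le B). lra.
Qed.

Lemma erfc_prod_sinh_half_sq_le B x : 0 <= B -> 1 <= x ->
  erfc_prod x * sinh_half_sq B <= exp (B - x * x) / 2.
Proof.
  intros HB Hx. pose proof (sinh_half_sq_le_exp B HB). pose proof (sinh_half_sq_ge_0 B).
  pose proof (erfc_prod_le_gauss x Hx). pose proof (erfc_prod_pos x).
  unfold Rminus. rewrite exp_plus.
  apply Rle_trans with (2 * gauss x * (exp B / 4)); [apply Rmult_le_compat; lra|].
  unfold gauss. pose proof (exp_pos B). pose proof (exp_pos (- (x * x))). lra.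
Qed.

Section CubicBounds.

Variable T : R.
Hypothesis HT : 2 <= T.

Lemma I_integrand_le_quadratic x : 0 <= x <= T ->
  I_integrand (erfc_prod x) (T * T) <= T * T - x * x + 1.
Proof.
  intros Hx. pose proof (erfc_prod_pos x). pose proof (erfc_prod_le_1 x).
  pose proof (sinh_half_sq_ge_0 (T * T)). pose proof (sinh_half_sq_le_exp (T * T) ltac:(nra)).
  unfold I_integrand. rewrite <- (ln_exp (T * T - x * x + 1)). apply ln_le; [nra|].
  destruct (Rle_dec x 1).
  - apply Rle_trans with (exp (T * T)); [pose proof (exp_ineq1_le (T * T)); nra|].
    apply exp_le. nra.
  - pose proof (erfc_prod_sinh_half_sq_le (T * T) x ltac:(nra) ltac:(lra)).
    assert (1 <= exp (T * T - x * x)) by (rewrite <- exp_0; apply exp_le; nra).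
    rewrite exp_plus. pose proof (exp_ineq1_le 1). nra.
Qed.

Lemma I_integrand_le_exp_linear x : T <= x ->
  I_integrand (erfc_prod x) (T * T) <= exp (2 * T - 2 * x).
Proof.
  intros Hx. pose proof (erfc_prod_pos x).
  pose proof (erfc_prod_sinh_half_sq_le (T * T) x ltac:(nra) ltac:(lra)).
  assert (exp (T * T - x * x) <= exp (2 * T - 2 * x)) by (apply exp_le; nra).
  pose proof (exp_pos (T * T - x * x)).
  destruct (I_integrand_bounds (erfc_prod x) (T * T)); lra.
Qed.

Lemma I_integrand_ge_quadratic x : 0 <= x ->
  T * T - (x + 1) * (x + 1) - 3 <= I_integrand (erfc_prod x) (T * T).
Proof.
  intros Hx. pose proof (erfc_prod_ge_gauss_succ x Hx) as Hlow. unfold gauss in Hlow.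
  pose proof (sinh_half_sq_ge_exp (T * T) ltac:(nra)). pose proof (erfc_prod_pos x).
  unfold I_integrand. rewrite <- (ln_exp (T * T - (x + 1) * (x + 1) - 3)).
  apply ln_le; [apply exp_pos|].
  replace (T * T - (x + 1) * (x + 1) - 3) with (- ((x + 1) * (x + 1)) + (T * T - 3)) by ring.
  rewrite exp_plus.
  assert (exp (T * T - 3) <= sinh_half_sq (T * T)).
  { assert (E3 : exp (T * T) = exp (T * T - 3) * exp 3) by (rewrite <- exp_plus; f_equal; ring).
    assert (8 <= exp 3).
    { replace 3 with (1 + 1 + 1) by ring. rewrite !exp_plus.
      pose proof (exp_ineq1_le 1). nra. }
    pose proof (exp_pos (T * T - 3)). nra. }
  pose proof (exp_pos (- ((x + 1) * (x + 1)))). pose proof (exp_pos (T * T - 3)).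
  assert (exp (- ((x + 1) * (x + 1))) * exp (T * T - 3) <= erfc_prod x * sinh_half_sq (T * T))
    by (apply Rmult_le_compat; lra).
  lra.
Qed.

Let f := fun eta => I_integrand (erfc_prod eta) (T * T).

Lemma ex_RInt_I_integrand a b : ex_RInt f a b.
Proof. apply ex_RInt_continuous_R, continuous_I_integrand. Qed.

Lemma RInt_I_integrand_head :
  Rabs (RInt f 0 T - 2 / 3 * (T * T * T)) <= 3 * (T * T).
Proof.
  assert (Hpoly : forall (p : R -> R) P, (forall x, is_derive P x (p x)) ->
            (forall x, continuous p x) -> ex_RInt p 0 T /\ RInt p 0 T = P T - P 0).
  { intros p P HP Hp. split; [now apply ex_RInt_continuous_R|now apply RInt_derive_R]. }
  destruct (Hpoly (fun x => T * T - x * x + 1) (fun x => T * T * x - x * x * x / 3 + x))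
    as [Hex1 HI1];
    [intros x; auto_derive; auto; field|intros; apply ex_derive_continuous_R; auto_derive; auto|].
  destruct (Hpoly (fun x => T * T - (x + 1) * (x + 1) - 3)
              (fun x => T * T * x - (x + 1) * (x + 1) * (x + 1) / 3 - 3 * x)) as [Hex2 HI2];
    [intros x; auto_derive; auto; field|intros; apply ex_derive_continuous_R; auto_derive; auto|].
  assert (RInt f 0 T <= RInt (fun x => T * T - x * x + 1) 0 T).
  { apply RInt_le; auto using ex_RInt_I_integrand; [lra|].
    intros; apply I_integrand_le_quadratic; lra. }
  assert (RInt (fun x => T * T - (x + 1) * (x + 1) - 3) 0 T <= RInt f 0 T).
  { apply RInt_le; auto using ex_RInt_I_integrand; [lra|].
    intros; apply I_integrand_ge_quadratic; lra. }
  apply Rabs_le. rewrite HI1 in *. rewrite HI2 in *. split; nra.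
Qed.

Lemma I_integrand_tail : 0 <= I (T * T) - RInt f 0 T <= 1 / 2.
Proof.
  pose proof (is_int_to_infty_Chasles f 0 T _ ex_RInt_I_integrand (is_int_to_infty_I (T * T)))
    as Htail.
  rewrite RInt_swap_R in Htail by apply ex_RInt_I_integrand.
  split.
  - assert (0 <= - RInt f 0 T + I (T * T)); [|lra].
    apply (is_int_to_infty_le (fun _ => 0) f T); [apply is_int_to_infty_0|exact Htail|].
    intros x _. apply I_integrand_bounds, Rlt_le, erfc_prod_pos.
  - assert (- RInt f 0 T + I (T * T) <= exp (2 * T - 2 * T) / 2);
      [|rewrite Rminus_diag, exp_0 in *; lra].
    apply (is_int_to_infty_le f (fun x => exp (2 * T - 2 * x)) T); [exact Htail| |].
    + apply is_int_to_infty_exp_linear.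
    + intros; apply I_integrand_le_exp_linear; lra.
Qed.

Lemma I_cubic : Rabs (I (T * T) - 2 / 3 * (T * T * T)) <= 7 * (T * T).
Proof.
  pose proof RInt_I_integrand_head as Hhead. pose proof I_integrand_tail.
  apply Rabs_le_between in Hhead. apply Rabs_le. split; nra.
Qed.

End CubicBounds.

(** * The quenched large deviation function *)

Lemma I_tangent B y : I B + dI B * (y - B) <= I y.
Proof.
  apply (convex_tangent_le I dI); [intros; apply is_derive_Reals, is_derive_I|apply convex_I].
Qed.

Lemma dI_surjective x : 0 < x -> exists B, 0 <= B /\ dI B = x.
Proof.
  intros Hx. set (t := 3 / 2 * (x + 7) + 2). set (B1 := t * t).
  assert (Ht : 2 <= t) by (unfold t; lra).
  assert (HdI : x <= dI B1).
  { pose proof (I_tangent B1 0) as Htan. rewrite I_0 in Htan.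
    pose proof (I_cubic t Ht) as Hcub. apply Rabs_le_between in Hcub. fold B1 in Hcub.
    assert (t * t * x <= t * t * (2 / 3 * t - 7)) by (apply Rmult_le_compat_l; [nra|unfold t; lra]).
    unfold B1 in *. apply Rmult_le_reg_l with (t * t); [nra|lra]. }
  destruct (IVT_gen dI 0 B1 x continuous_dI) as [B [HB HdB]].
  - rewrite dI_0, Rmin_left, Rmax_right by lra. split; lra.
  - rewrite Rmin_left, Rmax_right in HB by (unfold B1; nra). exists B. split; [lra|exact HdB].
Qed.

Lemma B_of_spec sigma xi : 0 < sigma -> xi <> 0 ->
  0 <= B_of sigma xi /\ dI (B_of sigma xi) = Rabs xi / sigma.
Proof.
  intros Hsigma Hxi.
  assert (Hspec : 0 <= B_of sigma xi /\ derivable_pt_lim I (B_of sigma xi) (Rabs xi / sigma)).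
  { unfold B_of. apply epsilon_spec.
    destruct (dI_surjective (Rabs xi / sigma)) as [B [HB HdB]].
    - apply Rdiv_lt_0_compat; [apply Rabs_pos_lt|]; auto.
    - exists B. rewrite <- HdB. split; [exact HB|apply is_derive_I]. }
  destruct Hspec as [HB Hd]. split; [exact HB|].
  apply (uniqueness_limite I (B_of sigma xi)); [apply is_derive_I|exact Hd].
Qed.

Section SupportingSlope.

Variables T x : R.
Hypothesis HT : 0 <= T.
Hypothesis Hx : 0 < x.
Hypothesis Hsupport : forall y, I (T * T) + x * (y - T * T) <= I y.

Lemma supporting_slope_le_cube : x <= 8 * ((T + 2) * (T + 2) * (T + 2)).
Proof.
  pose proof (Hsupport ((T + 2) * (T + 2))). pose proof (I_ge_0 (T * T)).
  pose proof (I_cubic (T + 2) ltac:(lra)) as Hcub. apply Rabs_le_between in Hcub.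
  assert (x <= x * ((T + 2) * (T + 2) - T * T)) by nra.
  nra.
Qed.

Lemma supporting_slope_le eps : 4 <= T -> 0 < eps <= 1 / 2 -> x <= T * (1 + eps) + 35 / eps.
Proof.
  intros H4 He. set (s := T * (1 + eps)).
  pose proof (Hsupport (s * s)).
  pose proof (I_cubic s ltac:(unfold s; nra)) as Hs. apply Rabs_le_between in Hs.
  pose proof (I_cubic T ltac:(lra)) as HT'. apply Rabs_le_between in HT'.
  set (W := T * (1 + eps) + 35 / eps).
  assert (HW : W * eps = T * (1 + eps) * eps + 35) by (unfold W; field; lra).
  assert (Hpos : 0 < s * s - T * T).
  { replace (s * s - T * T) with (T * T * (eps * (2 + eps))) by (unfold s; ring).
    apply Rmult_lt_0_compat; nra. }
  assert (HB : x * (s * s - T * T) <= 2 / 3 * (s * s * s - T * T * T) + 7 * (s * s + T * T))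
    by nra.
  assert (HE1 : s * s - T * T = T * T * eps * (2 + eps)) by (unfold s; ring).
  assert (HE2 : s * s * s - T * T * T = T * T * T * eps * (3 + 3 * eps + eps * eps))
    by (unfold s; ring).
  assert (HE3 : s * s + T * T = T * T * (2 + 2 * eps + eps * eps)) by (unfold s; ring).
  assert (Hgoal : 2 / 3 * (s * s * s - T * T * T) + 7 * (s * s + T * T) <= W * (s * s - T * T)).
  { rewrite HE1, HE2, HE3.
    replace (W * (T * T * eps * (2 + eps))) with (T * T * (2 + eps) * (W * eps)) by ring.
    rewrite HW.
    assert (0 <= T * T * T * eps * (eps + eps * eps / 3))
      by (apply Rmult_le_pos; [repeat apply Rmult_le_pos; lra|nra]).
    assert (0 <= T * T * (56 + 21 * eps - 7 * eps * eps)) by (apply Rmult_le_pos; nra).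
    nra. }
  change (x <= W). apply Rmult_le_reg_r with (s * s - T * T); [exact Hpos|lra].
Qed.

Lemma supporting_slope_ge eps : 4 <= T -> 0 < eps <= 1 / 2 -> T * (1 - eps) - 35 / eps <= x.
Proof.
  intros H4 He. set (s := T * (1 - eps)).
  assert (Hs2 : 2 <= s) by (unfold s; nra).
  pose proof (Hsupport (s * s)).
  pose proof (I_cubic s Hs2) as Hs. apply Rabs_le_between in Hs.
  pose proof (I_cubic T ltac:(lra)) as HT'. apply Rabs_le_between in HT'.
  set (W := T * (1 - eps) - 35 / eps).
  assert (HW : W * eps = T * (1 - eps) * eps - 35) by (unfold W; field; lra).
  assert (Hpos : 0 < T * T - s * s).
  { replace (T * T - s * s) with (T * T * (eps * (2 - eps))) by (unfold s; ring).
    apply Rmult_lt_0_compat; nra. }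
  assert (HB : 2 / 3 * (T * T * T - s * s * s) - 7 * (s * s + T * T) <= x * (T * T - s * s))
    by nra.
  assert (HE1 : T * T - s * s = T * T * eps * (2 - eps)) by (unfold s; ring).
  assert (HE2 : T * T * T - s * s * s = T * T * T * eps * (3 - 3 * eps + eps * eps))
    by (unfold s; ring).
  assert (HE3 : s * s + T * T = T * T * (2 - 2 * eps + eps * eps)) by (unfold s; ring).
  assert (Hgoal : W * (T * T - s * s) <= 2 / 3 * (T * T * T - s * s * s) - 7 * (s * s + T * T)).
  { rewrite HE1, HE2, HE3.
    replace (W * (T * T * eps * (2 - eps))) with (T * T * (2 - eps) * (W * eps)) by ring.
    rewrite HW.
    assert (0 <= T * T * T * eps * (eps - eps * eps / 3))
      by (apply Rmult_le_pos; [repeat apply Rmult_le_pos; lra|nra]).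
    assert (0 <= T * T * (56 - 21 * eps - 7 * eps * eps)) by (apply Rmult_le_pos; nra).
    nra. }
  change (W <= x). apply Rmult_le_reg_r with (T * T - s * s); [exact Hpos|lra].
Qed.

End SupportingSlope.

Lemma cubic_ratio_approx T x J eps d :
  0 < T -> 0 < x -> Rabs (x - T) <= d * T -> 0 <= d <= 1 / 2 ->
  Rabs (J - 2 / 3 * (T * T * T)) <= 7 * (T * T) -> 28 * (d * d) < eps / 2 -> 168 / T <= eps / 2 ->
  Rabs (3 * (T * T * x - J) / (x * x * x) - 1) < eps.
Proof.
  intros HT Hx Hxt Hd HJ Hd2 HT2.
  apply Rabs_le_between in Hxt. apply Rabs_le_between in HJ.
  assert (HT3 : 0 < T * T * T) by (repeat apply Rmult_lt_0_compat; lra).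
  assert (Hx3 : T * T * T / 8 <= x * x * x).
  { replace (T * T * T / 8) with ((T / 2) * (T / 2) * (T / 2)) by field.
    assert (T / 2 <= x) by nra. apply Rmult_le_compat; try nra. }
  assert (Hx3p : 0 < x * x * x) by (apply Rmult_lt_0_compat; nra).
  (* [3 (T^2 x - J) - x^3 = - (x - T)^2 (x + 2 T) - 3 (J - 2/3 T^3)] *)
  assert (Hnum : Rabs (3 * (T * T * x - J) - x * x * x)
                 <= 7 / 2 * (d * d) * (T * T * T) + 21 * (T * T)).
  { assert (Hsq : 0 <= (x - T) * (x - T) <= d * d * (T * T)).
    { split; [apply Rle_0_sqr|]. destruct Hxt. nra. }
    assert (Hxp : 0 <= x + 2 * T <= 7 / 2 * T) by (split; nra).
    assert (0 <= (x - T) * (x - T) * (x + 2 * T) <= d * d * (T * T) * (7 / 2 * T))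
      by (split; [apply Rmult_le_pos|apply Rmult_le_compat]; lra).
    apply Rabs_le. split; nra. }
  replace (3 * (T * T * x - J) / (x * x * x) - 1)
    with ((3 * (T * T * x - J) - x * x * x) / (x * x * x)) by (field; lra).
  rewrite Rabs_div, (Rabs_right (x * x * x)) by lra.
  apply Rle_lt_trans with ((7 / 2 * (d * d) * (T * T * T) + 21 * (T * T)) / (T * T * T / 8)).
  - apply Rle_trans with ((7 / 2 * (d * d) * (T * T * T) + 21 * (T * T)) / (x * x * x)).
    + apply Rmult_le_compat_r; [apply Rlt_le, Rinv_0_lt_compat|]; lra.
    + apply Rmult_le_compat_l; [nra|]. apply Rinv_le_contravar; lra.
  - replace ((7 / 2 * (d * d) * (T * T * T) + 21 * (T * T)) / (T * T * T / 8))
      with (28 * (d * d) + 168 / T) by (field; lra).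
    lra.
Qed.

Lemma quenched_equiv rho sigma : 0 < rho -> 0 < sigma ->
  equiv_at_infty (phi_q rho sigma) (fun xi => rho / (3 * sigma ^ 2) * Rabs xi ^ 3).
Proof.
  intros Hrho Hsigma eps Heps.
  set (d := Rmin (1 / 2) (eps / 100)).
  assert (Hd : 0 < d <= 1 / 2) by (split; [apply Rmin_pos; lra|apply Rmin_l]).
  assert (Hd2 : d <= eps / 100) by apply Rmin_r.
  set (T0 := 4 + 140 / (d * d) + 336 / eps).
  assert (0 <= 140 / (d * d)) by (apply Rdiv_le_0_compat; nra).
  assert (0 <= 336 / eps) by (apply Rdiv_le_0_compat; lra).
  assert (HT0d : 4 + 140 / (d * d) <= T0) by (unfold T0; lra).
  assert (HT0e : 336 / eps <= T0) by (unfold T0; lra).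
  exists (sigma * (8 * ((T0 + 2) * (T0 + 2) * (T0 + 2)))). intros xi Hxi.
  assert (Hxi0 : xi <> 0).
  { intros ->. rewrite Rabs_R0 in Hxi. assert (0 <= T0 + 2) by lra.
    assert (0 <= (T0 + 2) * (T0 + 2) * (T0 + 2)) by (repeat apply Rmult_le_pos; lra). nra. }
  set (x := Rabs xi / sigma).
  assert (Hxabs : Rabs xi = sigma * x) by (unfold x; field; lra).
  rewrite Hxabs in Hxi. apply Rmult_lt_reg_l in Hxi; [|exact Hsigma].
  assert (Hx : 0 < x) by (apply Rdiv_lt_0_compat; [apply Rabs_pos_lt|]; auto).
  destruct (B_of_spec sigma xi Hsigma Hxi0) as [HB HdB]. fold x in HdB.
  set (T := sqrt (B_of sigma xi)).
  assert (HBT : B_of sigma xi = T * T) by (unfold T; rewrite sqrt_sqrt; lra).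
  assert (HT : 0 <= T) by apply sqrt_pos.
  assert (Hsupport : forall y, I (T * T) + x * (y - T * T) <= I y)
    by (intros y; rewrite <- HBT, <- HdB; apply I_tangent).
  assert (HTT0 : T0 < T).
  { apply Rnot_le_lt. intros Hle.
    assert (x <= 8 * ((T + 2) * (T + 2) * (T + 2))) by (apply supporting_slope_le_cube; auto).
    assert ((T + 2) * (T + 2) * (T + 2) <= (T0 + 2) * (T0 + 2) * (T0 + 2))
      by (apply Rmult_le_compat; nra).
    lra. }
  assert (Hclose : Rabs (x - T) <= d * T).
  { assert (H70 : 70 / d <= d / 2 * T).
    { replace (70 / d) with (d / 2 * (140 / (d * d))) by (field; lra).
      apply Rmult_le_compat_l; lra. }
    assert (x <= T * (1 + d / 2) + 35 / (d / 2))
      by (apply supporting_slope_le; auto; lra).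
    assert (T * (1 - d / 2) - 35 / (d / 2) <= x)
      by (apply supporting_slope_ge; auto; lra).
    replace (35 / (d / 2)) with (70 / d) in * by (field; lra).
    apply Rabs_le. split; nra. }
  assert (HTe : 168 / T <= eps / 2).
  { assert (336 <= eps * T).
    { apply Rle_trans with (eps * (336 / eps)); [right; field; lra|].
      apply Rmult_le_compat_l; lra. }
    rewrite Rle_div_l by lra. lra. }
  assert (Hdd : 28 * (d * d) < eps / 2) by nra.
  pose proof (cubic_ratio_approx T x (I (T * T)) eps d ltac:(lra) Hx Hclose ltac:(lra)
                (I_cubic T ltac:(lra)) Hdd HTe) as Hratio.
  unfold phi_q. cbv zeta. rewrite HBT, Hxabs.
  replace ((rho * (T * T) * (sigma * x) - rho * sigma * I (T * T))
             / (rho / (3 * sigma ^ 2) * (sigma * x) ^ 3))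
    with (3 * (T * T * x - I (T * T)) / (x * x * x)) by (field; repeat split; lra).
  exact Hratio.
Qed.

Theorem mainTheorem6 (rho sigma : R) (Hrho : 0 < rho) (Hsigma : 0 < sigma) :
  equiv_at_infty (phi_a rho sigma) (fun xi => rho * Rabs xi) /\
  equiv_at_infty (phi_q rho sigma) (fun xi => rho / (3 * sigma ^ 2) * Rabs xi ^ 3).
Proof.
  split.
  - exact (annealed_equiv rho sigma Hrho Hsigma).
  - exact (quenched_equiv rho sigma Hrho Hsigma).
Qed.
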